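(* Let $\mathscr P$ be a polymatroid and let $\mathrm{Stal}_{\mathscr P}$ be computed with respect to any lexicographic order on $\mathbb N^p$. Then $\mathrm{Stal}_{\mathscr P}(\mathbf t)=\text{M\''ob}_{\mathscr P}(\mathbf t)$.
   Context: Notation: $[p]=\{1,\dots,p\}$; $\mathbf e_i$ is the $i$th standard basis vector; $\mathbf e_J=\sum_{j\in J}\mathbf e_j$; $|\mathbf n|=n_1+\dots+n_p$; $\le$ is componentwise, $<$ its strict version; $\mathbf t^{\mathbf n}=t_1^{n_1}\cdots t_p^{n_p}$. Polymatroid: a finite set $\mathscr P\subseteq\mathbb N^p$ that is homogeneous (all $\mathbf u\in\mathscr P$ have the same $|\mathbf u|$, the rank $\mathrm{rk}(\mathscr P)$) and M-convex: for all $\mathbf u,\mathbf v\in\mathscr P$ and $i$ with $u_i>v_i$ there is $j$ with $u_j<v_j$ and $\mathbf u-\mathbf e_i+\mathbf e_j\in\mathscr P$. $I(\mathscr P)=\{\mathbf n\in\mathbb N^p:\mathbf n\le\mathbf u\text{ for some }\mathbf u\in\mathscr P\}$. Lexicographic orders: given a total ordering $\sigma_1,\dots,\sigma_p$ of $[p]$, $\mathbf u\prec\mathbf v$ iff $\mathbf u\neq\mathbf v$ and at the first index (in the order $\sigma_1,\sigma_2,\dots$) where they differ, $\mathbf u$ has the smaller entry. Stalactites: for $\mathbf u\in\mathscr P$, $V\subseteq\mathscr P$, $L(\mathbf u;V)=\{\ell\in[p]:\mathbf u-\mathbf e_\ell+\mathbf e_j\in V\text{ for some }j\}$, $\mathrm{St}(\mathbf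 u;V)=\{\mathbf u-\mathbf e_J:J\subseteq L(\mathbf u;V)\}$. With $\mathscr P=\{\mathbf a_1\prec\dots\prec\mathbf a_r\}$, $c_{\mathbf n}(\mathscr P)$ is the number of $k$ with $\mathbf n\in\mathrm{St}(\mathbf a_k;\{\mathbf a_1,\dots,\mathbf a_{k-1}\})$; $\mathrm{Stal}_{\mathscr P}(\mathbf t)=\sum_{\mathbf n\in I(\mathscr P)}(-1)^{\mathrm{rk}(\mathscr P)-|\mathbf n|}c_{\mathbf n}(\mathscr P)\mathbf t^{\mathbf n}$. M\''obius polynomial: $P$ is the poset on $I(\mathscr P)\sqcup\{\hat1\}$ (componentwise order on $I(\mathscr P)$, $\hat1$ a new maximum), $\mu_P(\mathbf m,\mathbf m)=1$, $\mu_P(\mathbf m,\mathbf n)=-\sum_{\mathbf m\le\mathbf a<\mathbf n}\mu_P(\mathbf m,\mathbf a)$ for $\mathbf m<\mathbf n$; $\mu_{\mathscr P}(\mathbf n)=-\mu_P(\mathbf n,\hat1)$; $\text{M\''ob}_{\mathscr P}(\mathbf t)=\sum_{\mathbf n\in I(\mathscr P)}\mu_{\mathscr P}(\mathbf n)\mathbf t^{\mathbf n}$. *)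

From HB Require Import structures.
From mathcomp Require Import all_boot all_order all_algebra all_fingroup.
From mathcomp Require Import finmap.
From mathcomp Require Import mpoly.

Set Implicit Arguments.
Unset Strict Implicit.
Unset Printing Implicit Defensive.

Import GRing.Theory.
Local Open Scope ring_scope.
Local Open Scope fset_scope.

(* Vectors of N^p are multinomials 'X_{1..p}; |n| is [mdeg n]; the
   componentwise order <= on N^p is [lem] from mpoly. *)

Section Polymatroid.
Variable p : nat.
Implicit Types (u v n : 'X_{1..p}) (P : {fset 'X_{1..p}}).

(* u - e_i + e_j   (only used when u_i > 0, so the truncated
   subtraction is the integer one) *)
Definition shiftv u (i j : 'I_p) : 'X_{1..p} :=
  [multinom (u k - (k == i) + (k == j))%N | k < p].

Definition subJ u (J : {set 'I_p}) : 'X_{1..p} :=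
  [multinom (u k - (k \in J))%N | k < p].

Definition homogeneous P :=
  exists r : nat, forall u, u \in P -> mdeg u = r.

Definition M_convex P :=
  forall u v, u \in P -> v \in P -> forall i : 'I_p, (v i < u i)%N ->
    exists j : 'I_p, (u j < v j)%N /\ shiftv u i j \in P.

Definition polymatroid P := homogeneous P /\ M_convex P.

(* the rank: the common value of |u| (for a homogeneous set) *)
Definition rk P : nat := \max_(u <- P) mdeg u.

Definition inI P n : bool := has (fun u => lem n u) P.

(* an explicit enumeration of I(P): the elements of I(P) in the box [0,B]^p *)
Definition boxB P : nat := \max_(u <- P) \max_(i < p) u i.
Definition box (B : nat) : seq 'X_{1..p} :=
  map (fun f : {ffun 'I_p -> 'I_B.+1} => [multinom (nat_of_ord (f i)) | i < p])
      (enum {ffun 'I_p -> 'I_B.+1}).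
Definition IP P : seq 'X_{1..p} := [seq n <- box (boxB P) | inI P n].

(* lexicographic order attached to the total ordering s 0, s 1, ..., s (p-1)
   of [p]: u < v iff at the first index (in that order) where they differ,
   u has the smaller entry. *)
Definition lexlt (s : 'S_p) u v : bool :=
  [exists k : 'I_p,
     [forall k' : 'I_p, (k' < k)%N ==> (u (s k') == v (s k'))]
     && (u (s k) < v (s k))%N].

Definition Lset u (V : pred 'X_{1..p}) : {set 'I_p} :=
  [set l : 'I_p | [exists j : 'I_p, (0 < u l)%N && V (shiftv u l j)]].

Definition inSt u (V : pred 'X_{1..p}) n : bool :=
  [exists J : {set 'I_p}, (J \subset Lset u V) && (n == subJ u J)].

(* c_n(P): number of k with n in St(a_k; {a_1,...,a_{k-1}}), where
   {a_1,...,a_{k-1}} = the elements of P lexicographically smaller than a_k *)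
Definition cn (s : 'S_p) P n : nat :=
  count (fun u => inSt u (fun v => (v \in P) && lexlt s v u) n) P.

Definition Stal (s : 'S_p) P : {mpoly int[p]} :=
  \sum_(n <- IP P)
     (((-1) ^+ (rk P - mdeg n)%N * (cn s P n)%:R : int) *: 'X_[n]).

End Polymatroid.

(* The recursion is by fuel; fuel
   (size s).+1 exceeds the length of any chain in s. *)
Section Moebius.
Variables (T : eqType) (s : seq T) (le : rel T).

Fixpoint mobf (k : nat) (m n : T) : int :=
  if m == n then 1 else
  if k is k'.+1 then
    (if le m n then - \sum_(a <- s | le m a && le a n && (a != n)) mobf k' m a
     else 0)
  else 0.

Definition mobius (m n : T) : int := mobf (size s).+1 m n.
End Moebius.

Section MobPoly.
Variable p : nat.
Implicit Types (P : {fset 'X_{1..p}}).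

(* the poset I(P) ⊔ {1̂}: None is the adjoined maximum 1̂ *)
Definition Phat_le (x y : option 'X_{1..p}) : bool :=
  match x, y with
  | _, None => true
  | None, Some _ => false
  | Some a, Some b => lem a b
  end.

Definition Phat P : seq (option 'X_{1..p}) := None :: map Some (IP P).

Definition muP P (n : 'X_{1..p}) : int :=
  - mobius (Phat P) Phat_le (Some n) None.

Definition Mob P : {mpoly int[p]} :=
  \sum_(n <- IP P) (muP P n *: 'X_[n]).
End MobPoly.

(* Write f(a) = (-1)^(rk P - |a|) c_a(P) for the coefficients of Stal_P.
   Moebius inversion in I(P) ⊔ {1̂} reduces the theorem to: the sum of f over
   every upper set {a ∈ I(P) | n <= a} is 1.  Expanding c_a over stalactites,
   and using homogeneity for the sign, this sum becomes
     Σ_{u ∈ P} Σ_{J ⊆ L(u), n <= u - e_J} (-1)^|J|,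
   whose inner sum is the alternating sum over the subsets of
   L(u) ∩ {i | n_i < u_i} when n <= u, hence is 1 exactly when n <= u and that
   set is empty.  By M-convexity this happens for exactly one u: the
   lexicographically least element of P above n. *)

From HB Require Import structures.
From mathcomp Require Import all_boot all_order all_algebra all_fingroup.
From mathcomp Require Import finmap.
From mathcomp Require Import mpoly.
From mathcomp Require Import zify.

Set Implicit Arguments.
Unset Strict Implicit.
Unset Printing Implicit Defensive.

Import GRing.Theory.
Local Open Scope ring_scope.

Lemma sub_count_ltn (T : eqType) (a1 a2 : pred T) (r : seq T) x :
  subpred a1 a2 -> x \in r -> a2 x -> ~~ a1 x -> (count a1 r < count a2 r)%N.
Proof.
move=> s12; elim: r => //= y r IHr; rewrite inE => /orP[/eqP<- a2x a1x|xr a2x a1x].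
  by rewrite a2x (negbTE a1x) add0n add1n ltnS sub_count.
have := IHr xr a2x a1x; case: (a1 y) (s12 y) => [->//|_]; case: (a2 y) => /=; lia.
Qed.

Lemma exists_minimal (T : eqType) (lt : rel T) (r : seq T) x :
  irreflexive lt -> transitive lt -> x \in r ->
  exists2 m, m \in r & {in r, forall y, ~~ lt y m}.
Proof.
move=> ltxx lt_trans xr; pose below m := count (lt^~ m) r.
have [|k /hasP[m mr /eqP bm] kmin] := ex_minnP (P := fun k => has (fun y => below y == k) r).
  by exists (below x); apply/hasP; exists x.
exists m => // y yr; apply/negP => ltym.
have: (below y < below m)%N.
  apply: (sub_count_ltn (x := y)) => //= [z ltzy|]; first exact: lt_trans ltzy ltym.
  by rewrite ltxx.
have /kmin : has (fun z => below z == below y) r by apply/hasP; exists y.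
lia.
Qed.

Lemma sum_alternating_subsets (R : comPzRingType) (I : finType) (A : {set I}) :
  \sum_(J : {set I} | J \subset A) (-1 : R) ^+ #|J| = (A == set0)%:R.
Proof.
pose F i : R := if i \in A then -1 else 0.
have := @bigA_distr R 0 1 *%R +%R I F (fun=> 1); rewrite big_mkcond /=.
have -> : \prod_i (F i + 1) = (A == set0)%:R.
  have [A0|/set0Pn[i iA]] := eqVneq A set0.
    by rewrite big1 // => i _; rewrite /F A0 inE add0r.
  by rewrite (bigD1 i) //= /F iA addNr mul0r.
move=> ->; rewrite big_mkcond; apply: eq_big => // J _.
have [JA|nJA] := ifPn.
  rewrite -big_mkcond -prodr_const /=; apply: eq_bigr => i iJ.
  by rewrite /F (subsetP JA).
have /subsetPn[i iJ niA] := nJA.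
by rewrite (bigD1 i) //= iJ /F (negbTE niA) mul0r.
Qed.

Section Moebius.
Variables (T : eqType) (s : seq T) (le : rel T).
Hypothesis le_refl : reflexive le.
Hypothesis le_trans : transitive le.
Hypothesis le_anti : antisymmetric le.

Let interval_size m x := count (fun a => le m a && le a x && (a != x)) s.

Lemma interval_size_ltn m x a :
  a \in s -> le m a -> le a x -> a != x -> (interval_size m a < interval_size m x)%N.
Proof.
move=> as_ ma ax neq_ax; apply: (sub_count_ltn (x := a)) => //=; last first.
- by rewrite eqxx andbF.
- by rewrite ma ax.
move=> y /andP[/andP[my ya] neq_ya]; rewrite my (le_trans ya ax) /=.
by apply: contraNneq neq_ax => eq_yx; apply/eqP/le_anti; rewrite ax -eq_yx ya.
Qed.

Lemma mobf_fuel k k' m x : (interval_size m x < k)%N -> (interval_size m x < k')%N ->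
  mobf s le k m x = mobf s le k' m x.
Proof.
elim: k k' x => [|k IHk] [|k'] x //= ltk ltk'.
case: eqP => // _; case: ifP => // _; congr (- _).
rewrite big_seq_cond [in RHS]big_seq_cond; apply: eq_bigr => a /andP[as_ /andP[/andP[ma ax] neq_ax]].
have := interval_size_ltn as_ ma ax neq_ax => lt_ax; apply: IHk; lia.
Qed.

Lemma mobius_id m : mobius s le m m = 1.
Proof. by rewrite /mobius /= eqxx. Qed.

Lemma mobius_rec m x : m != x -> le m x ->
  mobius s le m x = - \sum_(a <- s | le m a && le a x && (a != x)) mobius s le m a.
Proof.
move=> neq_mx mx; rewrite {1}/mobius /= (negbTE neq_mx) mx; congr (- _).
rewrite big_seq_cond [in RHS]big_seq_cond; apply: eq_bigr => a /andP[as_ /andP[/andP[ma ax] neq_ax]].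
have lt_ax := interval_size_ltn as_ ma ax neq_ax.
have le_xs : (interval_size m x <= size s)%N by apply: count_size.
by apply: mobf_fuel; lia.
Qed.

Lemma mobius_sum m x : uniq s -> x \in s -> le m x ->
  \sum_(a <- s | le m a && le a x) mobius s le m a = (m == x)%:R.
Proof.
move=> s_uniq xs mx; have [->|neq_mx] := eqVneq m x.
  rewrite (eq_bigl (pred1 x)) => [|a]; last first.
    by apply/andP/eqP => [[ma am]|->]; [apply/le_anti/andP | rewrite le_refl].
  by rewrite -big_filter filter_pred1_uniq // big_seq1 mobius_id.
rewrite big_mkcond (bigD1_seq x) //= mx le_refl mobius_rec // -big_mkcondr /=.
by rewrite addrC (eq_bigl (fun a => le m a && le a x && (a != x))) ?subrr // => a; rewrite andbC.
Qed.

Lemma mobius_inversion (f : T -> int) n : uniq s -> n \in s ->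
  \sum_(a <- s | le n a) mobius s le n a * \sum_(b <- s | le a b) f b = f n.
Proof.
move=> s_uniq ns; under eq_bigr do rewrite big_distrr /=.
rewrite (exchange_big_dep (le n)) /= => [|a b na ab]; last exact: le_trans ab.
rewrite big_seq_cond (eq_bigr (fun b => (n == b)%:R * f b)) => [|b /andP[bs nb]]; last first.
  by rewrite -mulr_suml mobius_sum.
rewrite -big_seq_cond big_mkcond (bigD1_seq n) //= le_refl eqxx mul1r big1_seq ?addr0 //.
by move=> b /andP[neq_bn _]; rewrite eq_sym (negbTE neq_bn) mul0r if_same.
Qed.

End Moebius.

Lemma lepm_anti (p : nat) : antisymmetric (@lem p).
Proof.
move=> m1 m2 /andP[/mnm_lepP le12 /mnm_lepP le21]; apply/mnmP => i.
by apply/eqP; rewrite eqn_leq le12 le21.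
Qed.

Section LowerSet.
Variable p : nat.
Implicit Types (n u : 'X_{1..p}) (P : {fset 'X_{1..p}}).

Lemma Phat_le_refl : reflexive (@Phat_le p).
Proof. by case=> //= u; exact: lepm_refl. Qed.

Lemma Phat_le_trans : transitive (@Phat_le p).
Proof. by case=> [y|] [x|] [z|] //=; exact: lepm_trans. Qed.

Lemma Phat_le_anti : antisymmetric (@Phat_le p).
Proof. by case=> [x|] [y|] //= /lepm_anti->. Qed.

Lemma box_uniq B : uniq (box p B).
Proof.
rewrite map_inj_uniq ?enum_uniq // => f g /mnmP eq_fg.
by apply/ffunP => i; apply/val_inj; have := eq_fg i; rewrite !mnmE.
Qed.

Lemma IP_uniq P : uniq (IP P).
Proof. exact/filter_uniq/box_uniq. Qed.

Lemma mem_IP P n : (n \in IP P) = inI P n.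
Proof.
rewrite mem_filter; apply: andb_idr => /hasP[u uP /mnm_lepP le_nu].
apply/mapP; exists [ffun i => inord (n i) : 'I_(boxB P).+1]; first by rewrite mem_enum.
apply/mnmP => i; rewrite mnmE ffunE inordK // ltnS (leq_trans (le_nu i)) //.
apply: leq_trans (leq_bigmax (F := fun i => u i) i) _.
exact: (leq_bigmax_seq (F := fun u : 'X_{1..p} => \max_(i < p) u i)).
Qed.

Lemma Phat_uniq P : uniq (Phat P).
Proof. by rewrite /= map_inj_uniq ?IP_uniq ?andbT; [apply/mapP => -[] | move=> a b []]. Qed.

End LowerSet.

Section Lexicographic.
Variables (p : nat) (s : 'S_p).
Implicit Types (u v w : 'X_{1..p}).

Lemma lexltP u v : reflect (exists k : 'I_p,
    (forall k' : 'I_p, (k' < k)%N -> u (s k') = v (s k')) /\ (u (s k) < v (s k))%N)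
  (lexlt s u v).
Proof.
apply: (iffP existsP) => [[k /andP[/forallP eq_lt lt_k]]|[k [eq_lt lt_k]]]; exists k.
  by split=> // k' lt_k'k; apply/eqP/(implyP (eq_lt k')).
by rewrite lt_k andbT; apply/forallP => k'; apply/implyP => /eq_lt->.
Qed.

Lemma lexlt_irr : irreflexive (lexlt s).
Proof. by move=> u; apply/lexltP => -[k [_]]; rewrite ltnn. Qed.

Lemma lexlt_trans : transitive (lexlt s).
Proof.
move=> v u w /lexltP[k1 [eq1 lt1]] /lexltP[k2 [eq2 lt2]]; apply/lexltP.
have [lt_k12|lt_k21|/val_inj eq_k12] := ltngtP k1 k2.
- exists k1; split=> [k' lt_k'1|]; last by rewrite -eq2.
  by rewrite eq1 // eq2 // (ltn_trans lt_k'1).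
- exists k2; split=> [k' lt_k'2|]; last by rewrite eq1.
  by rewrite eq1 ?eq2 // (ltn_trans lt_k'2).
- subst k2; exists k1; split=> [k' lt_k'1|]; last exact: ltn_trans lt2.
  by rewrite eq1 ?eq2.
Qed.

Lemma lexlt_total u v : u != v -> lexlt s u v || lexlt s v u.
Proof.
move=> neq_uv.
have [i neq_i] : exists i, u (s i) != v (s i).
  apply/existsP; apply: contraR neq_uv => /existsPn eq_uv.
  apply/eqP/mnmP => j; rewrite -(permKV s j); exact/eqP/negbNE/eq_uv.
have [k neq_k min_k] :=
  arg_minnP (P := fun k => u (s k) != v (s k)) (fun k : 'I_p => nat_of_ord k) neq_i.
have eq_lt (k' : 'I_p) : (k' < k)%N -> u (s k') = v (s k').
  by move=> lt_k'k; apply/eqP; apply: contraTT lt_k'k => /min_k; rewrite -leqNgt.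
have [lt_uv|lt_vu|eq_uv] := ltngtP (u (s k)) (v (s k)).
- by apply/orP; left; apply/lexltP; exists k.
- by apply/orP; right; apply/lexltP; exists k; split=> // k' /eq_lt->.
- by rewrite eq_uv eqxx in neq_k.
Qed.

End Lexicographic.

Lemma sum_mul_eqb (T : eqType) (R : pzSemiRingType) (r : seq T) (F : T -> R) x :
  uniq r -> x \in r -> \sum_(a <- r) F a * (a == x)%:R = F x.
Proof.
move=> r_uniq xr; under eq_bigr do rewrite mulr_natr mulrb.
by rewrite -big_mkcond -big_filter filter_pred1_uniq // big_seq1.
Qed.

Definition slack (p : nat) (n u : 'X_{1..p}) : {set 'I_p} := [set i | n i < u i]%N.

Section Stalactite.
Variables (p : nat) (u : 'X_{1..p}) (V : pred 'X_{1..p}).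
Implicit Types (n : 'X_{1..p}) (J K : {set 'I_p}).

Lemma Lset_gt0 l : l \in Lset u V -> (0 < u l)%N.
Proof. by rewrite inE => /existsP[j /andP[]]. Qed.

Lemma mdeg_subJ J : J \subset Lset u V -> (mdeg (subJ u J) + #|J| = mdeg u)%N.
Proof.
move=> JL; rewrite !mdegE -sum1_card [X in (_ + X)%N]big_mkcond -big_split /=.
apply: eq_bigr => i _; rewrite mnmE; case: ifP => [/(subsetP JL)/Lset_gt0|_]; lia.
Qed.

Lemma subJ_inj J K : J \subset Lset u V -> K \subset Lset u V -> subJ u J = subJ u K -> J = K.
Proof.
move=> JL KL /mnmP eq_JK; apply/setP => i; have := eq_JK i; rewrite !mnmE.
case: (boolP (i \in J)) => [/(subsetP JL)|_]; case: (boolP (i \in K)) => [/(subsetP KL)|_] //=.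
- by move/Lset_gt0; lia.
- by move/Lset_gt0; lia.
Qed.

Lemma lem_subJ J : lem (subJ u J) u.
Proof. by apply/mnm_lepP => i; rewrite mnmE leq_subr. Qed.

Lemma lem_subJ_slack n J : J \subset Lset u V ->
  lem n (subJ u J) = lem n u && (J \subset slack n u).
Proof.
move=> JL; apply/mnm_lepP/andP => [le_nuJ|[/mnm_lepP le_nu /subsetP Jslack] i].
  split; first by apply/mnm_lepP => i; have := le_nuJ i; rewrite mnmE; lia.
  apply/subsetP => i iJ; rewrite inE; have := le_nuJ i; rewrite mnmE iJ.
  by have := Lset_gt0 (subsetP JL i iJ); lia.
rewrite mnmE; case: (boolP (i \in J)) => [/Jslack|_]; last by have := le_nu i; lia.
by rewrite inE; lia.
Qed.

End Stalactite.

Section StalactiteCount.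
Variables (p : nat) (s : 'S_p) (P : {fset 'X_{1..p}}).
Implicit Types (n u a : 'X_{1..p}).

Definition lex_before u : pred 'X_{1..p} := fun v => (v \in P) && lexlt s v u.

Definition Lbefore u : {set 'I_p} := Lset u (lex_before u).

Definition stal_coef n : int := (-1) ^+ (rk P - mdeg n) * (cn s P n)%:R.

Lemma cn_sum a : (cn s P a)%:R =
  \sum_(u <- P) \sum_(J : {set 'I_p} | J \subset Lbefore u) (a == subJ u J)%:R :> int.
Proof.
rewrite /cn -sum1_count natr_sum big_mkcond; apply: eq_bigr => u _ /=.
have [/existsP[J0 /andP[J0L /eqP->]]|aSt] := ifPn.
  rewrite (bigD1 J0) //= eqxx big1 ?addr0 // => J /andP[JL neq_JJ0].
  by case: eqP => // /(subJ_inj J0L JL) eq_J0J; rewrite eq_J0J eqxx in neq_JJ0.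
rewrite big1 // => J JL; case: eqP => // eq_a; case/negP: aSt.
by apply/existsP; exists J; rewrite JL eq_a eqxx.
Qed.

Lemma sum_cn (g : 'X_{1..p} -> int) :
  \sum_(a <- IP P) g a * (cn s P a)%:R =
  \sum_(u <- P) \sum_(J : {set 'I_p} | J \subset Lbefore u) g (subJ u J).
Proof.
under eq_bigr do rewrite cn_sum big_distrr /=.
rewrite exchange_big /=; apply: eq_big_seq => u uP.
under eq_bigr do rewrite big_distrr /=.
rewrite exchange_big; apply: eq_bigr => J _; apply: sum_mul_eqb (IP_uniq P) _.
by rewrite mem_IP; apply/hasP; exists u; last exact: lem_subJ.
Qed.

Lemma mdeg_rk u : homogeneous P -> u \in P -> mdeg u = rk P.
Proof.
move=> [r degP] uP; apply/eqP; rewrite eqn_leq.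
rewrite (leq_bigmax_seq (F := fun u : 'X_{1..p} => mdeg u)) //=.
by apply/bigmax_leqP_seq => v vP _; rewrite degP // degP.
Qed.

Lemma sum_stal_coef_up n : homogeneous P ->
  \sum_(a <- IP P | lem n a) stal_coef a =
  \sum_(u <- P) (lem n u && (Lbefore u :&: slack n u == set0))%:R.
Proof.
move=> homP; rewrite big_mkcond /=.
pose g a : int := (lem n a)%:R * (-1) ^+ (rk P - mdeg a).
rewrite (eq_bigr (fun a => g a * (cn s P a)%:R)) => [|a _]; last first.
  by rewrite /stal_coef /g -mulrA; case: ifP; rewrite ?mul1r ?mul0r.
rewrite sum_cn; apply: eq_big_seq => u uP.
pose h (J : {set 'I_p}) : int := (J \subset slack n u)%:R * (-1) ^+ #|J|.
rewrite (eq_bigr (fun J => (lem n u)%:R * h J)) => [|J JL]; last first.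
  have := mdeg_subJ JL; rewrite (mdeg_rk homP uP) => degJ.
  rewrite /g /h (lem_subJ_slack _ JL) -mulnb natrM -mulrA.
  by rewrite (_ : (rk P - _)%N = #|J|) //; lia.
rewrite -big_distrr /= /h; under eq_bigr do rewrite mulr_natl mulrb.
rewrite -big_mkcondr (eq_bigl (fun J : {set 'I_p} => J \subset Lbefore u :&: slack n u)) => [|J].
  by rewrite sum_alternating_subsets -natrM mulnb.
by rewrite subsetI.
Qed.

End StalactiteCount.

Section LexMinimal.
Variables (p : nat) (s : 'S_p) (P : {fset 'X_{1..p}}).
Implicit Types (n u v : 'X_{1..p}).

Lemma Lbefore_slack_neq0 n u v : M_convex P -> u \in P -> v \in P ->
  lem n v -> lexlt s v u -> Lbefore s P u :&: slack n u != set0.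
Proof.
move=> exchP uP vP /mnm_lepP le_nv /lexltP[k [eq_lt lt_k]].
have [j [lt_j shP]] := exchP u v uP vP (s k) lt_k.
have neq_j : j != s k by apply: contraTneq lt_j => ->; rewrite -leqNgt ltnW.
apply/set0Pn; exists (s k); rewrite !inE (leq_ltn_trans (le_nv _) lt_k) andbT.
apply/existsP; exists j; rewrite (leq_ltn_trans (leq0n _) lt_k) /= /lex_before shP /=.
apply/lexltP; exists k; split=> [k' lt_k'k|]; last first.
  by rewrite mnmE eqxx eq_sym (negbTE neq_j); lia.
have neq_k' : s k' != s k by rewrite (inj_eq perm_inj) -val_eqE neq_ltn lt_k'k.
have neq_k'j : s k' != j by apply: contraTneq lt_j => <-; rewrite eq_lt // ltnn.
by rewrite mnmE (negbTE neq_k') (negbTE neq_k'j) subn0 addn0.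
Qed.

Lemma Lbefore_slack_eq0 n u : lem n u ->
  {in P, forall v, lem n v -> ~~ lexlt s v u} -> Lbefore s P u :&: slack n u = set0.
Proof.
move=> /mnm_lepP le_nu u_min; apply/setP => l; rewrite !inE.
apply/negbTE/negP => /andP[/existsP[j /and3P[gt0_ul shP lt_sh]] lt_nl].
suff: lem n (shiftv u l j) by move/(u_min _ shP); rewrite lt_sh.
apply/mnm_lepP => k; rewrite mnmE; have := le_nu k.
by case: (eqVneq k l) => [->|] /=; lia.
Qed.

Lemma sum_free_upper n : M_convex P -> inI P n ->
  \sum_(u <- P) (lem n u && (Lbefore s P u :&: slack n u == set0))%:R = 1 :> int.
Proof.
move=> exchP /hasP[u0 u0P le_nu0].
have [|m] := exists_minimal (@lexlt_irr _ s) (@lexlt_trans _ s) (x := u0)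
  (r := [seq u <- P | lem n u]); first by rewrite mem_filter le_nu0.
rewrite mem_filter => /andP[le_nm mP] m_min.
have free_m u : u \in P -> (lem n u && (Lbefore s P u :&: slack n u == set0)) = (u == m).
  move=> uP; have [->|neq_um] := eqVneq u m.
    by rewrite le_nm Lbefore_slack_eq0 ?eqxx // => v vP le_nv; rewrite m_min // mem_filter le_nv.
  apply/negbTE/andP => -[le_nu /eqP free_u].
  have /orP[lt_um|lt_mu] := lexlt_total s neq_um.
    by have := m_min u; rewrite mem_filter le_nu uP lt_um => /(_ isT).
  by have := Lbefore_slack_neq0 exchP uP mP le_nm lt_mu; rewrite free_u eqxx.
rewrite (eq_big_seq (fun u => 1 * (u == m)%:R)) => [|u /free_m->]; last by rewrite mul1r.
exact: sum_mul_eqb (fset_uniq P) mP.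
Qed.

End LexMinimal.

Section MoebiusPolynomial.
Variables (p : nat) (P : {fset 'X_{1..p}}).
Implicit Types (n x : 'X_{1..p}).

Local Notation mu := (mobius (Phat P) (@Phat_le p)).

Lemma muP_sum n : muP P n = \sum_(a <- IP P | lem n a) mu (Some n) (Some a).
Proof.
rewrite /muP (mobius_rec _ (@Phat_le_trans p) (@Phat_le_anti p)) // opprK big_cons big_map.
by apply: eq_bigl => a; rewrite /= !andbT.
Qed.

Lemma sum_Phat_up (f : 'X_{1..p} -> int) x :
  \sum_(b <- Phat P | Phat_le (Some x) b) oapp f 0 b = \sum_(a <- IP P | lem x a) f a.
Proof. by rewrite big_cons big_map add0r. Qed.

(* Inversion takes place in P-hat, with [f] extended by 0 at the top 1̂. *)
Lemma eq_muP_of_upper_sums (f : 'X_{1..p} -> int) n : n \in IP P ->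
  {in IP P, forall x, \sum_(a <- IP P | lem x a) f a = 1} -> f n = muP P n.
Proof.
move=> nIP f_up.
have nPhat : Some n \in Phat P by rewrite inE map_f ?orbT.
have := mobius_inversion (@Phat_le_refl p) (@Phat_le_trans p) (@Phat_le_anti p)
  (oapp f 0) (Phat_uniq P) nPhat.
rewrite muP_sum /= => <-.
rewrite big_cons /= big_cons big_map big_pred0 // addr0 mulr0 add0r big_map.
rewrite big_seq_cond [in RHS]big_seq_cond; apply: eq_bigr => a /andP[aIP _].
by rewrite sum_Phat_up f_up ?mulr1.
Qed.

End MoebiusPolynomial.

Theorem mainTheorem8 (p : nat) (P : {fset 'X_{1..p}}) (s : 'S_p) :
  polymatroid P -> Stal s P = Mob P.
Proof.
move=> [homP exchP]; apply: eq_big_seq => n nIP; congr (_ *: _).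
apply: (eq_muP_of_upper_sums (f := stal_coef s P)) => // x xIP.
by rewrite sum_stal_coef_up // sum_free_upper // -mem_IP.
Qed.
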